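(* Let $F$ be an ordered $(m,n)$-forest with priority traversal $\tau$. Then $\mathrm{Rec}(F)=\mathrm{Rec}(\tau)$.
   Context: $[m]=\{1,\dots,m\}$. An ordered $(m,n)$-forest is a rooted forest with $n+1$ nodes and $m$ edges whose component trees $T_0,\dots,T_{n-m}$ are totally ordered, with unlabeled roots marked $\circ,\circ_1,\dots,\circ_{n-m}$, and non-root vertices labeled bijectively by $[m]$. Priority search: initially only the children of $\circ$ are unblocked; at each step visit the unblocked unvisited node with the smallest label and unblock its children; when a tree is exhausted, move to the next tree, visit its root and unblock its children. The priority traversal $\tau$ is the word of length $n$ recording the labels of visited nodes in order, with $-$ recorded for each root visited (the initial visit of $\circ$ is not recorded). $\mathrm{Rec}(F)$ is the set of forest records: non-root nodes whose label is the largest among the labels of the non-root nodes on the path from the root of their tree to them. For a word in $[m]\cup\{-\}$, $\mathrm{Rec}$ denotes the set of its records, i.e. the left-to-right maxima of its maximal subwords not containing $-$. *)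

From mathcomp Require Import all_boot all_order.
Set Implicit Arguments. Unset Strict Implicit. Unset Printing Implicit Defensive.

(* An ordered (m,n)-forest (m <= n) is encoded by its parent map.
   Nodes:  roots  inl r,  r : 'I_(n-m).+1   (r = 0 is the root "o", r = i is "o_i";
                   tree T_r is the tree of root r, trees ordered by r)
           non-root vertices  inr v,  v : 'I_m  (ordinal v carries label v+1,
                   so the order on labels is the order on ordinals).
   [par v] is the parent of the non-root vertex v. *)

Section Forest.
Variables m n : nat.

Definition node := ('I_(n - m).+1 + 'I_m)%type.

Definition par_rel (par : 'I_m -> node) : rel node :=
  fun x y => match x with inr v => par v == y | inl _ => false end.

Definition is_forest (par : 'I_m -> node) : Prop :=
  forall v : 'I_m, exists r : 'I_(n - m).+1, connect (par_rel par) (inr v) (inl r).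

(* Forest records: non-root nodes whose label is the largest among the labels
   of the non-root nodes on the path from the root of their tree to them,
   i.e. larger than or equal to every non-root ancestor. *)
Definition forest_rec (par : 'I_m -> node) : {set 'I_m} :=
  [set v | [forall u : 'I_m, connect (par_rel par) (inr v) (inr u) ==> (u <= v)]].

(* State: index t of the current tree (roots o,...,o_t have
   been visited) and the list V of visited non-root vertices. *)
Definition unblocked (par : 'I_m -> node) (t : nat) (V : seq 'I_m) (v : 'I_m) : bool :=
  match par v with
  | inl r => (r <= t)%N
  | inr u => u \in V
  end.

Definition cand (par : 'I_m -> node) (t : nat) (V : seq 'I_m) : seq 'I_m :=
  [seq v <- enum 'I_m | (v \notin V) && unblocked par t V v].

(* Letters: [Some v] is the label of v, [None] is the symbol "-". *)
Fixpoint trav (par : 'I_m -> node) (fuel t : nat) (V : seq 'I_m)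
  : seq (option 'I_m) :=
  match fuel with
  | 0 => [::]
  | f.+1 =>
    match cand par t V with
    | v :: _ => Some v :: trav par f t (v :: V)       (* visit smallest label *)
    | [::] => if (t < n - m)%N then None :: trav par f t.+1 V
              else [::]
    end
  end.

(* The priority traversal: a word of length n (initial visit of o unrecorded). *)
Definition priority_traversal (par : 'I_m -> node) : seq (option 'I_m) :=
  trav par n 0 [::].

End Forest.

(* Records of a word over [m] u {-}: left-to-right maxima of its maximal
   subwords not containing "-".  [cur] is the current maximum of the block. *)
Fixpoint word_rec_seq (m : nat) (cur : option 'I_m) (w : seq (option 'I_m)) : seq 'I_m :=
  match w with
  | [::] => [::]
  | None :: w' => word_rec_seq None w'
  | Some v :: w' =>
    match cur with
    | None => v :: word_rec_seq (Some v) w'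
    | Some c => if (c < v)%N then v :: word_rec_seq (Some v) w'
                else word_rec_seq cur w'
    end
  end.

Definition word_rec (m : nat) (w : seq (option 'I_m)) : {set 'I_m} :=
  [set v | v \in word_rec_seq (m := m) None w].

From mathcomp Require Import all_boot all_order.
From mathcomp Require Import zify.

Set Implicit Arguments. Unset Strict Implicit. Unset Printing Implicit Defensive.

(* The search keeps, besides the visited set, the maximum [cur] of the labels
   visited so far in the current tree (the current maximum of the word).  Every visited proper ancestor of an
   unvisited vertex lies in the current tree and is therefore [<= cur]; so a
   vertex visited with a label above [cur] dominates all its ancestors.
   Conversely, when [c] was visited it was the smallest candidate, so every
   unvisited vertex of the current tree with a label below [c] has an ancestor
   [>= c]; hence a vertex visited with a label below [cur] is not a record. *)

Lemma size_lt_card (T : finType) (V : seq T) x :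
  uniq V -> x \notin V -> size V < #|T|.
Proof.
move=> uV xV; have /card_uniqP E : uniq (x :: V) by rewrite /= xV.
by rewrite -[_ < _]/(size (x :: V) <= _) -E max_card.
Qed.

Lemma mem_cons_if (T : eqType) (R : pred T) (V s : seq T) x :
  x \notin V -> (forall z, (z \in s) = (z \notin x :: V) && R z) ->
  forall z, (z \in if R x then x :: s else s) = (z \notin V) && R z.
Proof.
move=> xV Hs z; case: (eqVneq z x) => [->|zx].
  by case Rx: (R x); rewrite ?mem_head ?xV // Hs mem_head Rx andbF.
have -> : (z \in if R x then x :: s else s) = (z \in s).
  by case: (R x); rewrite // in_cons (negbTE zx).
by rewrite Hs in_cons (negbTE zx).
Qed.

Section PrioritySearch.
Variables (m n : nat) (par : 'I_m -> node m n).

Local Notation "x ->* y" := (connect (par_rel par) x y) (at level 70).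

Definition visited (t : nat) (V : seq 'I_m) (y : node m n) : bool :=
  match y with inl r => r <= t | inr u => u \in V end.

Definition waiting t V (v : 'I_m) : Prop :=
  v \notin V /\ exists2 y, visited t V y & inr v ->* y.

Lemma mem_cand t V v :
  (v \in cand par t V) = (v \notin V) && visited t V (par v).
Proof. by rewrite mem_filter mem_enum andbT /unblocked; case: (par v). Qed.

Lemma path_root (r : 'I_(n - m).+1) p : path (par_rel par) (inl r) p -> p = [::].
Proof. by case: p. Qed.

Lemma connect_parent x u :
  inr x ->* inr u -> u != x -> exists2 w, par x = inr w & inr w ->* inr u.
Proof.
move=> /connectP [[|y p] /= Hp Hl] ux; first by case: Hl ux => ->; rewrite eqxx.
case/andP: Hp => /eqP Hy Hp; case: y Hy Hp Hl => [r|w] Hy Hp Hl.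
  by rewrite (path_root Hp) in Hl.
by exists w => //; apply/connectP; exists p.
Qed.

Lemma waiting_cand_ancestor t V v :
  waiting t V v -> exists2 a, inr v ->* inr a & a \in cand par t V.
Proof.
case=> vV [y + /connectP [p Hp Ey]]; rewrite {y}Ey.
elim: p v vV Hp => [|[r|u] p IH] v vV /=; first by rewrite (negbTE vV).
  case/andP=> /eqP Hv /path_root -> /= rt.
  by exists v; rewrite ?connect0 // mem_cand vV Hv.
case/andP=> /eqP Hv Hp Hl; case uV: (u \in V).
  by exists v; rewrite ?connect0 // mem_cand vV Hv.
have [a ua Ha] := IH u (negbT uV) Hp Hl.
by exists a => //; apply: connect_trans ua; apply: connect1; rewrite /= Hv.
Qed.

Lemma cand_nil_not_waiting t V v : cand par t V = [::] -> ~ waiting t V v.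
Proof. by move=> Hc /waiting_cand_ancestor [a _]; rewrite Hc. Qed.

Lemma cand_nil_visited_all t V :
  is_forest par -> cand par t V = [::] -> ~~ (t < n - m) -> forall z, z \in V.
Proof.
move=> forest Hc tn z; apply/negPn/negP => zV; have [r zr] := forest z.
have rt : visited t V (inl r) by rewrite /=; have := ltn_ord r; lia.
by apply: (cand_nil_not_waiting (v := z) Hc); split=> //; exists (inl r).
Qed.

Lemma cand_head_min t V x r a :
  cand par t V = x :: r -> a \in cand par t V -> x <= a.
Proof.
have leq_tr : transitive (fun a b : 'I_m => a <= b) by move=> ? ? ?; apply: leq_trans.
have : sorted (fun a b : 'I_m => a <= b) (cand par t V).
  apply: sorted_filter => //.
  by have := iota_sorted 0 m; rewrite -val_enum_ord sorted_map.
move=> + Hc; rewrite Hc /= => /(order_path_min leq_tr) /allP Hr.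
by rewrite in_cons => /predU1P [->|/Hr].
Qed.

Definition parent_closed t V := forall w, w \in V -> visited t V (par w).

Lemma closed_ancestor t V w u :
  parent_closed t V -> w \in V -> inr w ->* inr u -> u \in V.
Proof.
move=> cV + /connectP [p Hp Hl]; elim: p w Hp Hl => [|[r|w'] p IH] w /=.
- by move=> _ [->].
- by case/andP=> _ /path_root ->.
- by case/andP=> /eqP Hw Hp Hl wV; apply: IH Hp Hl _; have := cV w wV; rewrite Hw.
Qed.

Definition exceeds (cur : option 'I_m) (x : 'I_m) : bool :=
  if cur is Some c then c < x else true.

Definition bounds (cur : option 'I_m) (w : 'I_m) : bool :=
  if cur is Some c then w <= c else false.

Definition next_max (cur : option 'I_m) (x : 'I_m) : option 'I_m :=
  if exceeds cur x then Some x else cur.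

Lemma word_rec_seq_visit cur x w :
  word_rec_seq cur (Some x :: w) =
  let s := word_rec_seq (next_max cur x) w in if exceeds cur x then x :: s else s.
Proof. by rewrite /next_max; case: cur => //= c; case: ifP. Qed.

Lemma bounds_next_max cur x w : bounds cur w || (w == x) -> bounds (next_max cur x) w.
Proof.
rewrite /next_max; case: cur => [c|] /=; last by move=> /eqP ->.
by case: ltnP => /= cx /orP [|/eqP ->]; lia.
Qed.

Definition dominates t V (c : 'I_m) : Prop :=
  c \in V /\ forall v, waiting t V v -> v < c -> exists2 a, inr v ->* inr a & c <= a.

Record search_inv t V cur : Prop := SearchInv {
  inv_uniq : uniq V;
  inv_closed : parent_closed t V;
  inv_bounds : forall w v, w \in V -> v \notin V -> inr v ->* inr w -> bounds cur w;
  inv_dominates : forall c, cur = Some c -> dominates t V c }.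

Lemma search_inv0 : search_inv 0 [::] None.
Proof. by []. Qed.

Section Step.
Variables (t : nat) (V : seq 'I_m) (cur : option 'I_m).
Hypothesis inv : search_inv t V cur.

Lemma inv_next_tree : cand par t V = [::] -> search_inv t.+1 V None.
Proof.
case: inv => uV cV bV _ Hc; split => // [w /cV|w v wV vV vw].
  by case: (par w) => //= r rt; apply: leqW.
by case: (cand_nil_not_waiting (v := v) Hc); split=> //; exists (inr w).
Qed.

Variables (x : 'I_m) (r : seq 'I_m).
Hypothesis cand_x : cand par t V = x :: r.

Lemma head_cand : x \notin V /\ visited t V (par x).
Proof. by apply/andP; rewrite -mem_cand cand_x mem_head. Qed.

Lemma waiting_visit v : waiting t (x :: V) v -> waiting t V v.
Proof.
have [xV xpar] := head_cand.
case=> /norP [_ vV] [[r' |u] /= yv vy]; split=> //; first by exists (inl r').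
case/predU1P: yv => [eu|uV]; last by exists (inr u).
exists (par x) => //; apply: connect_trans vy _; apply: connect1.
by rewrite eu /= eqxx.
Qed.

Lemma exceeds_forest_rec : exceeds cur x = (x \in forest_rec par).
Proof.
have [xV xpar] := head_cand; case: inv => _ cV bV dV.
rewrite inE; apply/idP/forallP => [xc u|xrec].
  apply/implyP=> xu; case: (eqVneq u x) => [-> //|ux].
  have [w xw wu] := connect_parent xu ux.
  have uV : u \in V by apply: closed_ancestor cV _ wu; rewrite xw in xpar.
  by move: (bV u x uV xV xu) xc; case: cur => //= c; lia.
case E: cur => [c|] //=; case: ltnP => // xc; have [cV' domc] := dV c E.
have xc' : x < c by rewrite ltn_neqAle xc andbT; apply: contraNneq xV => /val_inj ->.
have [|a xa ca] := domc x _ xc'; last by have := implyP (xrec a) xa; lia.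
by split=> //; exists (par x); rewrite // connect1 //= eqxx.
Qed.

Lemma inv_visit : search_inv t (x :: V) (next_max cur x).
Proof.
have [xV xpar] := head_cand; case: inv => uV cV bV dV; split.
- by rewrite /= xV.
- move=> w; rewrite in_cons => /predU1P [->|/cV]; [move: xpar|];
    by case: (par _) => //= u u_in; rewrite in_cons u_in orbT.
- move=> w v wV vV vw; apply: bounds_next_max.
  case/predU1P: wV => [->|wV]; first by rewrite eqxx orbT.
  by rewrite (bV w v wV) //; move: vV; rewrite in_cons => /norP [].
- rewrite /next_max; case: ifP => _ c.
    case=> <-; split=> [|v /waiting_visit /waiting_cand_ancestor [a va Ha] _].
      exact: mem_head.
    by exists a => //; apply: cand_head_min cand_x Ha.
  move=> /dV [cV' domc]; split=> [|v /waiting_visit]; last exact: domc.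
  by rewrite in_cons cV' orbT.
Qed.

End Step.

Lemma trav_word_rec : is_forest par ->
  forall f t V cur, search_inv t V cur -> m - size V + (n - m - t) <= f ->
  forall z, (z \in word_rec_seq cur (trav par f t V)) =
            (z \notin V) && (z \in forest_rec par).
Proof.
move=> forest; elim=> [|f IH] t V cur inv fuel z /=.
  case zV: (z \in V) => //; suff : size V < m by lia.
  by have := size_lt_card (inv_uniq inv) (negbT zV); rewrite card_ord.
case Hc: (cand par t V) => [|x r].
  case: ifP => tn; last by rewrite (cand_nil_visited_all forest Hc) ?tn.
  by rewrite /= IH //; [exact: (inv_next_tree inv Hc) | lia].
rewrite word_rec_seq_visit (exceeds_forest_rec inv Hc).
apply: mem_cons_if (proj1 (head_cand Hc)) _ z => z'; apply: IH.
  exact: (inv_visit inv Hc).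
suff : size V < m by move: fuel; rewrite /=; set s := size V; lia.
by have := size_lt_card (inv_uniq inv) (proj1 (head_cand Hc)); rewrite card_ord.
Qed.

End PrioritySearch.

Theorem lemma4p5 (m n : nat) (par : 'I_m -> node m n) :
  (m <= n)%N -> is_forest par ->
  forest_rec par = word_rec (priority_traversal par).
Proof.
move=> mn forest; apply/setP => z.
rewrite [RHS]inE (trav_word_rec forest (search_inv0 par)) //.
by rewrite /= subn0; lia.
Qed.
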